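(* Let $w_1,w_2,w_3\in(-\infty,1)\setminus\{0\}$, $n_j=\tfrac12(1-\sqrt{1-w_j})$, and for $\lambda\in\mathbb{S}^1$ let $\nu(\lambda)=(\nu_{w_1}(\lambda),\nu_{w_2}(\lambda),\nu_{w_3}(\lambda))$ with $\nu_w(\lambda)=\frac12-\frac12\sqrt{1+\frac{w(\lambda-1)^2}{4\lambda}}$ (nonnegative square root). Then $\nu(\lambda)\in T$ for all $\lambda\in\mathbb{S}^1$ if and only if \[ |n_1|+|n_2|+|n_3|\le 1,\quad |n_i|\le|n_j|+|n_k|,\quad |w_i|\le|w_j|+|w_k|\quad\text{for all }\{i,j,k\}=\{1,2,3\}. \]
   Context: $T_0\subset\mathbb{R}^3$ is the closed tetrahedron $\{(\nu_1,\nu_2,\nu_3):\nu_1+\nu_2+\nu_3\le1,\ \nu_i\le\nu_j+\nu_k\ \forall\{i,j,k\}=\{1,2,3\}\}$, and $T$ is the orbit of $T_0$ under the group of transformations of $\mathbb{R}^3$ generated by the maps $\nu_k\mapsto\nu_k+1$ and $\nu_k\mapsto-\nu_k$ ($k=1,2,3$, acting on one coordinate at a time). For $\lambda=e^{i\theta}$, $\frac{(\lambda-1)^2}{4\lambda}=-\sin^2(\theta/2)$. *)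

From Stdlib Require Import Reals ZArith.
From Coquelicot Require Import Coquelicot.

Open Scope R_scope.

(* On the unit circle the radicand is real (it equals 1 - w sin^2(theta/2)),
   so we take its real part and the (nonnegative) real square root. *)
Definition nu_w (w : R) (l : C) : R :=
  1/2 - 1/2 * sqrt (Re (RtoC 1 + (RtoC w * ((l - RtoC 1) * (l - RtoC 1)) / (RtoC 4 * l)))%C).

Definition InT0 (x y z : R) : Prop :=
  x + y + z <= 1 /\ x <= y + z /\ y <= x + z /\ z <= x + y.

Definition is_sign (e : R) : Prop := e = 1 \/ e = -1.

(* T = orbit of T_0 under the group generated by nu_k -> nu_k + 1 and
   nu_k -> - nu_k; its elements are exactly the maps
   nu_k -> e_k nu_k + m_k with e_k = +-1, m_k in Z (coordinatewise). *)
Definition InT (x y z : R) : Prop :=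
  exists (e1 e2 e3 : R) (m1 m2 m3 : Z),
    is_sign e1 /\ is_sign e2 /\ is_sign e3 /\
    InT0 (e1 * x + IZR m1) (e2 * y + IZR m2) (e3 * z + IZR m3).

Definition n_w (w : R) : R := 1/2 * (1 - sqrt (1 - w)).

(* On the unit circle [(lambda - 1)^2 / (4 lambda) = -s] with [s = sin^2 (theta / 2)] ranging
   over [[0, 1]], so the curve is [s |-> (nu (w1 s), nu (w2 s), nu (w3 s))] with
   [nu t = (1 - sqrt (1 - t)) / 2 = t * kappa t], [kappa] positive and increasing.  While all
   [|nu (wj s)| <= 1/2], membership in [T] is membership of [(|nu (wj s)|)_j] in [T_0].
   Necessity: at small [s] we have [|nu (w s)| ~ s |w| / 4], which forces the triangle
   inequalities for the [|wj|]; these in turn exclude [wj <= -3] (at the scale where the smallest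
   [wj s] equals [-3] the coordinates sum to more than [1]), so at [s = 1] all coordinates are at
   most [1/2] and the conditions on the [nj] follow.  Sufficiency: [|nu (w s)|] increases with
   [s], and [|nu (wi s)| <= |nu (wj s)| + |nu (wk s)|] holds at every [s]: from the triangle
   inequality for the [|wj|] and the monotonicity of [kappa] when [wi] is the smallest of the
   three, from the monotonicity of [|nu|] on each side of [0] when it is the middle one, and from
   the inequality at [s = 1] when it is the largest, because [kappa (w s) / kappa w] decreases
   in [w]. *)

From Stdlib Require Import Reals ZArith Lra Psatz.
From Coquelicot Require Import Coquelicot.
Open Scope R_scope.

Definition nu (t : R) : R := 1/2 - 1/2 * sqrt (1 - t).

Definition kappa (t : R) : R := / (2 * (1 + sqrt (1 - t))).

Definition triangle (a b c : R) : Prop := a <= b + c /\ b <= a + c /\ c <= a + b.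

Definition admissible (a b c : R) : Prop :=
  forall s, 0 <= s <= 1 -> InT (nu (a * s)) (nu (b * s)) (nu (c * s)).

Lemma n_w_nu w : n_w w = nu w.
Proof. unfold n_w, nu; ring. Qed.

Lemma Re_radicand_on_circle w x y : x * x + y * y = 1 ->
  Re (RtoC 1 + (RtoC w * (((x, y) - RtoC 1) * ((x, y) - RtoC 1)) / (RtoC 4 * (x, y))))%C
  = 1 - w * ((1 - x) / 2).
Proof.
  intros Hxy.
  unfold Cdiv, Cinv, Cplus, Cmult, Cminus, Copp, RtoC, Re, Im; simpl.
  replace ((4 * x - 0 * y) * ((4 * x - 0 * y) * 1) + (4 * y + 0 * x) * ((4 * y + 0 * x) * 1))
    with 16 by nra.
  field_simplify.
  replace (y ^ 2) with (1 - x * x) by nra.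
  field.
Qed.

Lemma nu_w_on_circle w l : Cmod l = 1 -> nu_w w l = nu (w * ((1 - Re l) / 2)).
Proof.
  destruct l as [x y]; intros Hl.
  assert (Hxy : x * x + y * y = 1).
  { pose proof (Cmod2_alt (x, y)) as E; rewrite Hl in E; simpl in E; nra. }
  unfold nu_w, nu; rewrite Re_radicand_on_circle by exact Hxy; reflexivity.
Qed.

Lemma circle_scale_bounds l : Cmod l = 1 -> 0 <= (1 - Re l) / 2 <= 1.
Proof.
  intros Hl; pose proof (re_le_Cmod l) as H; rewrite Hl in H.
  apply Rabs_le_between in H; lra.
Qed.

Lemma circle_scale_surj s : 0 <= s <= 1 -> exists l : C, Cmod l = 1 /\ (1 - Re l) / 2 = s.
Proof.
  intros Hs; set (x := 1 - 2 * s).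
  exists (x, sqrt (1 - x * x)); split; [| simpl; unfold x; field].
  unfold Cmod; simpl; rewrite !Rmult_1_r, sqrt_sqrt by (unfold x; nra).
  replace (x * x + (1 - x * x)) with 1 by ring; apply sqrt_1.
Qed.

Lemma circle_iff_admissible a b c :
  (forall l : C, Cmod l = 1 -> InT (nu_w a l) (nu_w b l) (nu_w c l)) <-> admissible a b c.
Proof.
  split.
  - intros H s Hs; destruct (circle_scale_surj s Hs) as (l & Hl & <-).
    rewrite <- !nu_w_on_circle by exact Hl; auto.
  - intros H l Hl; rewrite !nu_w_on_circle by exact Hl.
    apply H, circle_scale_bounds, Hl.
Qed.

Lemma InT0_bounds x y z : InT0 x y z -> 0 <= x <= 1/2 /\ 0 <= y <= 1/2 /\ 0 <= z <= 1/2.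
Proof. unfold InT0; lra. Qed.

Lemma sign_shift_eq_Rabs x e m :
  Rabs x <= 1/2 -> is_sign e -> 0 <= e * x + IZR m <= 1/2 -> e * x + IZR m = Rabs x.
Proof.
  intros Hx [-> | ->] Hm; apply Rabs_le_between in Hx;
    (assert (Hm1 : (-1 < m)%Z) by (apply lt_IZR; lra);
     assert (Hm2 : (m < 2)%Z) by (apply lt_IZR; lra);
     assert (Hm' : m = 0%Z \/ m = 1%Z) by lia;
     destruct Hm' as [-> | ->]; simpl in *; unfold Rabs; destruct Rcase_abs; lra).
Qed.

Lemma InT0_Rabs_of_InT x y z :
  Rabs x <= 1/2 -> Rabs y <= 1/2 -> Rabs z <= 1/2 -> InT x y z ->
  InT0 (Rabs x) (Rabs y) (Rabs z).
Proof.
  intros Hx Hy Hz (e1 & e2 & e3 & m1 & m2 & m3 & He1 & He2 & He3 & H).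
  pose proof (InT0_bounds _ _ _ H) as (B1 & B2 & B3).
  rewrite <- (sign_shift_eq_Rabs x e1 m1), <- (sign_shift_eq_Rabs y e2 m2),
    <- (sign_shift_eq_Rabs z e3 m3) by assumption.
  exact H.
Qed.

Lemma sign_of_Rabs x : exists e, is_sign e /\ e * x + IZR 0 = Rabs x.
Proof.
  unfold Rabs; destruct Rcase_abs.
  - exists (-1); split; [right | simpl]; ring.
  - exists 1; split; [left | simpl]; ring.
Qed.

Lemma InT_of_InT0_Rabs x y z : InT0 (Rabs x) (Rabs y) (Rabs z) -> InT x y z.
Proof.
  intros H.
  destruct (sign_of_Rabs x) as (e1 & He1 & E1), (sign_of_Rabs y) as (e2 & He2 & E2),
    (sign_of_Rabs z) as (e3 & He3 & E3).
  exists e1, e2, e3, 0%Z, 0%Z, 0%Z; rewrite E1, E2, E3; auto.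
Qed.

Lemma kappa_pos t : 0 < kappa t.
Proof. unfold kappa; pose proof (sqrt_pos (1 - t)); apply Rinv_0_lt_compat; lra. Qed.

Lemma kappa_le t t' : t <= t' -> t' <= 1 -> kappa t <= kappa t'.
Proof.
  intros; unfold kappa; pose proof (sqrt_pos (1 - t')).
  assert (sqrt (1 - t') <= sqrt (1 - t)) by (apply sqrt_le_1_alt; lra).
  apply Rinv_le_contravar; lra.
Qed.

Lemma kappa_lt t t' : t < t' -> t' <= 1 -> kappa t < kappa t'.
Proof.
  intros; unfold kappa; pose proof (sqrt_pos (1 - t')).
  assert (sqrt (1 - t') < sqrt (1 - t)) by (apply sqrt_lt_1_alt; lra).
  apply Rinv_lt_contravar; nra.
Qed.

Lemma kappa_m3 : kappa (-3) = 1/6.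
Proof.
  unfold kappa; replace (1 - -3) with (2 * 2) by ring.
  rewrite sqrt_square by lra; field.
Qed.

Lemma kappa_near_quarter t : t <= 1 -> Rabs (kappa t - 1/4) <= Rabs t / 4.
Proof.
  intros Ht; pose proof (sqrt_pos (1 - t)) as Hq.
  pose proof (sqrt_sqrt (1 - t) ltac:(lra)) as Hq2.
  set (q := sqrt (1 - t)) in *.
  assert (E : kappa t - 1/4 = t / ((1 + q) * (1 + q)) / 4).
  { unfold kappa; fold q; replace t with (1 - q * q) by lra; field; lra. }
  assert (Hv : 0 < / ((1 + q) * (1 + q)) <= 1).
  { split; [apply Rinv_0_lt_compat; nra |].
    rewrite <- Rinv_1; apply Rinv_le_contravar; nra. }
  rewrite E; unfold Rdiv; set (v := / ((1 + q) * (1 + q))) in *.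
  unfold Rabs; destruct Rcase_abs, Rcase_abs; nra.
Qed.

(* Rationalize with the conjugate [1 + sqrt (1 - t)]. *)
Lemma nu_eq_mul_kappa t : t <= 1 -> nu t = t * kappa t.
Proof.
  intros Ht; pose proof (sqrt_pos (1 - t)) as Hq.
  pose proof (sqrt_sqrt (1 - t) ltac:(lra)) as Hq2.
  unfold nu, kappa; set (q := sqrt (1 - t)) in *.
  replace t with (1 - q * q) by lra; field; lra.
Qed.

Lemma Rabs_nu t : t <= 1 -> Rabs (nu t) = Rabs t * kappa t.
Proof.
  intros; rewrite nu_eq_mul_kappa, Rabs_mult, (Rabs_pos_eq (kappa t)) by
    (try apply Rlt_le, kappa_pos; lra).
  reflexivity.
Qed.

Lemma Rabs_nu_scale w s : w * s <= 1 -> 0 <= s -> Rabs (nu (w * s)) = s * (Rabs w * kappa (w * s)).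
Proof. intros; rewrite Rabs_nu, Rabs_mult, (Rabs_pos_eq s) by lra; ring. Qed.

Lemma Rabs_nu_scale_bounds w s : w * s <= 1 -> 0 <= s ->
  s * Rabs w / 4 - s * s * (w * w) / 4 <= Rabs (nu (w * s)) <= s * Rabs w / 4 + s * s * (w * w) / 4.
Proof.
  intros Hws Hs; rewrite Rabs_nu_scale by assumption.
  pose proof (kappa_near_quarter (w * s) Hws) as K.
  rewrite Rabs_mult, (Rabs_pos_eq s) in K by lra; apply Rabs_le_between in K.
  assert (Hw2 : Rabs w * Rabs w = w * w) by (rewrite <- Rabs_mult; apply Rabs_pos_eq; nra).
  pose proof (Rabs_pos w).
  assert (0 <= s * Rabs w) by nra.
  split; nra.
Qed.

Lemma Rabs_nu_m3 : Rabs (nu (-3)) = 1/2.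
Proof.
  unfold nu; replace (1 - -3) with (2 * 2) by ring.
  rewrite sqrt_square by lra; rewrite Rabs_left; lra.
Qed.

Lemma Rabs_nu_le_half t : -3 <= t <= 1 -> Rabs (nu t) <= 1/2.
Proof.
  intros; unfold nu; pose proof (sqrt_pos (1 - t)).
  assert (sqrt (1 - t) <= 2).
  { rewrite <- (sqrt_square 2) by lra; apply sqrt_le_1_alt; lra. }
  apply Rabs_le_between; lra.
Qed.

Lemma Rabs_nu_le_pos t t' : 0 <= t <= t' -> t' <= 1 -> Rabs (nu t) <= Rabs (nu t').
Proof.
  intros; unfold nu.
  assert (sqrt (1 - t') <= sqrt (1 - t)) by (apply sqrt_le_1_alt; lra).
  assert (sqrt (1 - t) <= sqrt 1) by (apply sqrt_le_1_alt; lra); rewrite sqrt_1 in *.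
  pose proof (sqrt_pos (1 - t')).
  rewrite !Rabs_pos_eq; lra.
Qed.

Lemma Rabs_nu_le_neg t t' : t' <= t <= 0 -> Rabs (nu t) <= Rabs (nu t').
Proof.
  intros; unfold nu.
  assert (sqrt (1 - t) <= sqrt (1 - t')) by (apply sqrt_le_1_alt; lra).
  assert (sqrt 1 <= sqrt (1 - t)) by (apply sqrt_le_1_alt; lra); rewrite sqrt_1 in *.
  rewrite !Rabs_left1; lra.
Qed.

Lemma Rabs_nu_between a b c : b <= a <= c -> c <= 1 -> Rabs (nu a) <= Rabs (nu b) + Rabs (nu c).
Proof.
  intros; pose proof (Rabs_pos (nu b)); pose proof (Rabs_pos (nu c)).
  destruct (Rle_or_lt 0 a).
  - assert (Rabs (nu a) <= Rabs (nu c)) by (apply Rabs_nu_le_pos; lra); lra.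
  - assert (Rabs (nu a) <= Rabs (nu b)) by (apply Rabs_nu_le_neg; lra); lra.
Qed.

Lemma mul_scale_lt_1 w s : w < 1 -> 0 <= s <= 1 -> w * s < 1.
Proof. intros; destruct (Rle_or_lt 0 w); nra. Qed.

Lemma Rabs_nu_le_scale w s : w < 1 -> 0 <= s <= 1 -> Rabs (nu (w * s)) <= Rabs (nu w).
Proof.
  intros; destruct (Rle_or_lt 0 w).
  - apply Rabs_nu_le_pos; nra.
  - apply Rabs_nu_le_neg; nra.
Qed.

(* With [P = sqrt (1 - s + s u^2)], this says that [(1 + P) / (1 + u)] is nonincreasing in [u];
   the key is [P >= sqrt s * u]. *)
Lemma conj_ratio_le u u' P P' s :
  0 <= u <= u' -> 0 <= s <= 1 -> 0 <= P -> 0 <= P' ->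
  P * P = 1 - s + s * (u * u) -> P' * P' = 1 - s + s * (u' * u') ->
  (1 + P') * (1 + u) <= (1 + P) * (1 + u').
Proof.
  intros Hu Hs HP HP' EP EP'.
  pose proof (sqrt_pos s) as Hr; pose proof (sqrt_sqrt s ltac:(lra)) as Hr2.
  assert (Hr1 : sqrt s <= sqrt 1) by (apply sqrt_le_1_alt; lra); rewrite sqrt_1 in Hr1.
  set (r := sqrt s) in *.
  assert (Hru : r * u <= P).
  { destruct (Rle_or_lt (r * u) P) as [|H]; auto. nra. }
  assert (Hru' : r * u' <= P').
  { destruct (Rle_or_lt (r * u') P') as [|H]; auto. nra. }
  assert (Hsr : s <= r) by nra.
  assert (K1 : s * (1 + u) * (u + u') <= (1 + P) * (P + P')).
  { assert ((1 + P) * (P + P') >= (1 + r * u) * (r * u + r * u')).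
    { apply Rle_ge, Rmult_le_compat; nra. }
    assert ((r * (1 + r * u) - s * (1 + u)) * (u + u') >= 0)
      by (apply Rle_ge, Rmult_le_pos; nra).
    nra. }
  destruct (Req_dec (P + P') 0) as [H0 | H0].
  - assert (P = 0) by lra; assert (P' = 0) by lra; nra.
  - assert (HPP : 0 < P + P') by lra.
    assert (K2 : (1 + u) * (P' - P) * (P' + P) <= (u' - u) * (1 + P) * (P + P')).
    { replace ((1 + u) * (P' - P) * (P' + P)) with ((1 + u) * s * ((u' - u) * (u' + u))) by nra.
      nra. }
    assert (K3 : (1 + u) * (P' - P) <= (u' - u) * (1 + P)).
    { apply (Rmult_le_reg_r (P + P')); nra. }
    nra.
Qed.

(* That is, [kappa (w * s) / kappa w] is nonincreasing in [w]. *)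
Lemma kappa_ratio_le w w' s : w' <= w -> w < 1 -> 0 <= s <= 1 ->
  kappa (w * s) * kappa w' <= kappa (w' * s) * kappa w.
Proof.
  intros Hw Hw1 Hs.
  assert (w * s <= 1) by nra; assert (w' * s <= 1) by nra.
  pose proof (sqrt_pos (1 - w)); pose proof (sqrt_pos (1 - w')).
  pose proof (sqrt_pos (1 - w * s)); pose proof (sqrt_pos (1 - w' * s)).
  pose proof (sqrt_sqrt (1 - w) ltac:(lra)); pose proof (sqrt_sqrt (1 - w') ltac:(lra)).
  pose proof (sqrt_sqrt (1 - w * s) ltac:(lra)); pose proof (sqrt_sqrt (1 - w' * s) ltac:(lra)).
  assert (sqrt (1 - w) <= sqrt (1 - w')) by (apply sqrt_le_1_alt; lra).
  pose proof (conj_ratio_le (sqrt (1 - w)) (sqrt (1 - w')) (sqrt (1 - w * s)) (sqrt (1 - w' * s)) s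
    ltac:(lra) Hs ltac:(lra) ltac:(lra) ltac:(nra) ltac:(nra)).
  unfold kappa; rewrite <- !Rinv_mult; apply Rinv_le_contravar; nra.
Qed.

Lemma Rabs_nu_triangle_scaled_min a b c s : a <= b -> a <= c -> b < 1 -> c < 1 -> 0 <= s <= 1 ->
  Rabs a <= Rabs b + Rabs c ->
  Rabs (nu (a * s)) <= Rabs (nu (b * s)) + Rabs (nu (c * s)).
Proof.
  intros Hab Hac Hb Hc Hs Hw.
  pose proof (mul_scale_lt_1 b s Hb Hs); pose proof (mul_scale_lt_1 c s Hc Hs).
  rewrite !Rabs_nu_scale by nra.
  assert (kappa (a * s) <= kappa (b * s)) by (apply kappa_le; nra).
  assert (kappa (a * s) <= kappa (c * s)) by (apply kappa_le; nra).
  pose proof (kappa_pos (a * s)); pose proof (Rabs_pos b); pose proof (Rabs_pos c).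
  rewrite <- Rmult_plus_distr_l; apply Rmult_le_compat_l; nra.
Qed.

Lemma Rabs_nu_triangle_scaled_max a b c s : b <= a -> c <= a -> a < 1 -> 0 <= s <= 1 ->
  Rabs (nu a) <= Rabs (nu b) + Rabs (nu c) ->
  Rabs (nu (a * s)) <= Rabs (nu (b * s)) + Rabs (nu (c * s)).
Proof.
  intros Hba Hca Ha Hs Hn.
  pose proof (mul_scale_lt_1 a s Ha Hs).
  rewrite !Rabs_nu in Hn by lra; rewrite !Rabs_nu_scale by nra.
  pose proof (kappa_ratio_le a b s Hba Ha Hs) as Rb.
  pose proof (kappa_ratio_le a c s Hca Ha Hs) as Rc.
  pose proof (kappa_pos a); pose proof (kappa_pos (a * s)).
  pose proof (Rabs_pos b); pose proof (Rabs_pos c).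
  assert (Rabs a * kappa (a * s) * kappa a
          <= (Rabs b * kappa (b * s) + Rabs c * kappa (c * s)) * kappa a) by nra.
  rewrite <- Rmult_plus_distr_l; apply Rmult_le_compat_l; [lra |].
  apply (Rmult_le_reg_r (kappa a)); lra.
Qed.

Lemma Rabs_nu_triangle_scaled a b c s : a < 1 -> b < 1 -> c < 1 -> 0 <= s <= 1 ->
  Rabs a <= Rabs b + Rabs c -> Rabs (nu a) <= Rabs (nu b) + Rabs (nu c) ->
  Rabs (nu (a * s)) <= Rabs (nu (b * s)) + Rabs (nu (c * s)).
Proof.
  intros Ha Hb Hc Hs Hw Hn.
  pose proof (mul_scale_lt_1 b s Hb Hs); pose proof (mul_scale_lt_1 c s Hc Hs).
  destruct (Rle_or_lt a b), (Rle_or_lt a c).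
  - apply Rabs_nu_triangle_scaled_min; assumption.
  - rewrite Rplus_comm; apply Rabs_nu_between; nra.
  - apply Rabs_nu_between; nra.
  - apply Rabs_nu_triangle_scaled_max; lra.
Qed.

Lemma le_0_of_le_small_multiples x K eps : 0 < eps ->
  (forall s, 0 < s < eps -> x <= s * K) -> x <= 0.
Proof.
  intros Heps H; destruct (Rle_or_lt x 0) as [| Hx]; auto.
  pose proof (Rabs_pos K); pose proof (Rle_abs K).
  set (s := Rmin (eps / 2) (x / (2 * (Rabs K + 1)))).
  assert (Hs0 : 0 < s) by (apply Rmin_glb_lt; apply Rdiv_lt_0_compat; lra).
  assert (Hs1 : s <= eps / 2) by apply Rmin_l.
  assert (Hs2 : s * (2 * (Rabs K + 1)) <= x).
  { assert (E : x / (2 * (Rabs K + 1)) * (2 * (Rabs K + 1)) = x) by (field; lra).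
    assert (s <= x / (2 * (Rabs K + 1))) by apply Rmin_r.
    rewrite <- E; apply Rmult_le_compat_r; lra. }
  specialize (H s ltac:(lra)); nra.
Qed.

(* For small scales [|nu (w s)| = s |w| / 4 + O(s^2)]. *)
Lemma Rabs_le_of_small_scales a b c eps : 0 < eps -> a < 1 -> b < 1 -> c < 1 ->
  (forall s, 0 < s < eps -> Rabs (nu (a * s)) <= Rabs (nu (b * s)) + Rabs (nu (c * s))) ->
  Rabs a <= Rabs b + Rabs c.
Proof.
  intros Heps Ha Hb Hc H.
  enough (Rabs a - Rabs b - Rabs c <= 0) by lra.
  apply (le_0_of_le_small_multiples _ (a * a + b * b + c * c) (Rmin eps 1));
    [apply Rmin_glb_lt; lra |].
  intros s Hs.
  assert (Hs1 : s < eps) by (pose proof (Rmin_l eps 1); lra).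
  assert (Hs2 : s < 1) by (pose proof (Rmin_r eps 1); lra).
  pose proof (Rabs_nu_scale_bounds a s ltac:(apply Rlt_le, mul_scale_lt_1; lra) ltac:(lra)).
  pose proof (Rabs_nu_scale_bounds b s ltac:(apply Rlt_le, mul_scale_lt_1; lra) ltac:(lra)).
  pose proof (Rabs_nu_scale_bounds c s ltac:(apply Rlt_le, mul_scale_lt_1; lra) ltac:(lra)).
  specialize (H s ltac:(lra)).
  apply (Rmult_le_reg_l s); [lra |]; nra.
Qed.

(* At the scale where [a s = -3] the coordinate [|nu (a s)|] reaches [1/2], while the other two
   add up to more than [1/2]. *)
Lemma gt_m3_of_scaled_sum_le_1 a b c : a <= b -> a <= c -> b < 1 -> c < 1 -> b <> 0 -> c <> 0 ->
  Rabs a <= Rabs b + Rabs c ->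
  (forall s, 0 <= s <= 1 -> Rabs (nu (a * s)) <= 1/2 -> Rabs (nu (b * s)) <= 1/2 ->
     Rabs (nu (c * s)) <= 1/2 -> Rabs (nu (a * s)) + Rabs (nu (b * s)) + Rabs (nu (c * s)) <= 1) ->
  -3 < a.
Proof.
  intros Hab Hac Hb Hc Hb0 Hc0 Hw H.
  destruct (Rle_or_lt a (-3)) as [Ha |]; auto; exfalso.
  set (s := -3 / a).
  assert (Has : a * s = -3) by (unfold s; field; lra).
  assert (Hs : 0 < s <= 1) by (split; nra).
  assert (Hbs : a * s <= b * s) by nra; assert (Hcs : a * s <= c * s) by nra.
  pose proof (mul_scale_lt_1 b s Hb ltac:(lra)); pose proof (mul_scale_lt_1 c s Hc ltac:(lra)).
  specialize (H s ltac:(lra)).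
  rewrite Has, Rabs_nu_m3 in H.
  specialize (H ltac:(lra) ltac:(apply Rabs_nu_le_half; lra) ltac:(apply Rabs_nu_le_half; lra)).
  assert (Hsa : s * Rabs a = 3) by (rewrite Rabs_left by lra; lra).
  assert (0 < Rabs b) by (apply Rabs_pos_lt; auto).
  assert (0 < Rabs c) by (apply Rabs_pos_lt; auto).
  assert (Kc : 1/6 <= kappa (c * s)) by (rewrite <- kappa_m3; apply kappa_le; lra).
  pose proof (kappa_pos (b * s)).
  rewrite !Rabs_nu_scale in H by lra.
  destruct (Req_dec b a) as [-> | Hba].
  - assert (0 < s * (Rabs c * kappa (c * s))).
    { pose proof (kappa_pos (c * s)); apply Rmult_lt_0_compat; [| apply Rmult_lt_0_compat]; lra. }
    rewrite Has, kappa_m3 in H; lra.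
  - assert (Kb : 1/6 < kappa (b * s)) by (rewrite <- kappa_m3; apply kappa_lt; nra).
    assert (Rabs b * (1/6) < Rabs b * kappa (b * s)) by (apply Rmult_lt_compat_l; lra).
    assert (Rabs c * (1/6) <= Rabs c * kappa (c * s)) by (apply Rmult_le_compat_l; lra).
    nra.
Qed.

Lemma admissible_InT0_Rabs a b c s : admissible a b c -> 0 <= s <= 1 ->
  Rabs (nu (a * s)) <= 1/2 -> Rabs (nu (b * s)) <= 1/2 -> Rabs (nu (c * s)) <= 1/2 ->
  InT0 (Rabs (nu (a * s))) (Rabs (nu (b * s))) (Rabs (nu (c * s))).
Proof. intros H Hs Hx Hy Hz; exact (InT0_Rabs_of_InT _ _ _ Hx Hy Hz (H s Hs)). Qed.

Lemma admissible_triangle a b c : a < 1 -> b < 1 -> c < 1 ->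
  admissible a b c -> triangle (Rabs a) (Rabs b) (Rabs c).
Proof.
  intros Ha Hb Hc H.
  pose proof (Rabs_pos a); pose proof (Rabs_pos b); pose proof (Rabs_pos c).
  set (eps := / (1 + Rabs a + Rabs b + Rabs c)).
  assert (Heps : 0 < eps) by (apply Rinv_0_lt_compat; lra).
  assert (Hsmall : forall s, 0 < s < eps ->
            InT0 (Rabs (nu (a * s))) (Rabs (nu (b * s))) (Rabs (nu (c * s)))).
  { intros s Hs.
    assert (Hs1 : s * (1 + Rabs a + Rabs b + Rabs c) < 1).
    { assert (eps * (1 + Rabs a + Rabs b + Rabs c) = 1) by (unfold eps; field; lra); nra. }
    assert (Hw : forall w, Rabs w <= Rabs a + Rabs b + Rabs c -> Rabs (nu (w * s)) <= 1/2).
    { intros w Hw; apply Rabs_nu_le_half.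
      assert (Rabs w * s <= (Rabs a + Rabs b + Rabs c) * s) by (apply Rmult_le_compat_r; lra).
      assert (Hws : Rabs (w * s) < 1) by (rewrite Rabs_mult, (Rabs_pos_eq s); lra).
      apply Rabs_lt_between in Hws; lra. }
    assert (s <= 1) by nra.
    apply admissible_InT0_Rabs; try apply Hw; auto; lra. }
  repeat split; apply (Rabs_le_of_small_scales _ _ _ eps); auto;
    intros s Hs; destruct (Hsmall s Hs) as (_ & ? & ? & ?); lra.
Qed.

Lemma admissible_gt_m3 a b c : a < 1 -> b < 1 -> c < 1 -> a <> 0 -> b <> 0 -> c <> 0 ->
  admissible a b c -> triangle (Rabs a) (Rabs b) (Rabs c) -> -3 < a /\ -3 < b /\ -3 < c.
Proof.
  intros Ha Hb Hc Ha0 Hb0 Hc0 H (T1 & T2 & T3).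
  assert (Hsum : forall s, 0 <= s <= 1 -> Rabs (nu (a * s)) <= 1/2 -> Rabs (nu (b * s)) <= 1/2 ->
            Rabs (nu (c * s)) <= 1/2 ->
            Rabs (nu (a * s)) + Rabs (nu (b * s)) + Rabs (nu (c * s)) <= 1).
  { intros s Hs Hx Hy Hz; exact (proj1 (admissible_InT0_Rabs a b c s H Hs Hx Hy Hz)). }
  assert (Ma : a <= b -> a <= c -> -3 < a) by (intros; apply (gt_m3_of_scaled_sum_le_1 a b c); auto).
  assert (Mb : b <= a -> b <= c -> -3 < b).
  { intros; apply (gt_m3_of_scaled_sum_le_1 b a c); auto.
    intros s Hs ? ? ?; specialize (Hsum s Hs); lra. }
  assert (Mc : c <= a -> c <= b -> -3 < c).
  { intros; apply (gt_m3_of_scaled_sum_le_1 c a b); auto.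
    intros s Hs ? ? ?; specialize (Hsum s Hs); lra. }
  destruct (Rle_or_lt a b), (Rle_or_lt a c), (Rle_or_lt b c);
    first [ pose proof (Ma ltac:(lra) ltac:(lra)) | pose proof (Mb ltac:(lra) ltac:(lra))
          | pose proof (Mc ltac:(lra) ltac:(lra)) ]; lra.
Qed.

Lemma admissible_necessary a b c : a < 1 -> b < 1 -> c < 1 -> a <> 0 -> b <> 0 -> c <> 0 ->
  admissible a b c ->
  InT0 (Rabs (nu a)) (Rabs (nu b)) (Rabs (nu c)) /\ triangle (Rabs a) (Rabs b) (Rabs c).
Proof.
  intros Ha Hb Hc Ha0 Hb0 Hc0 H.
  pose proof (admissible_triangle a b c Ha Hb Hc H) as Htri.
  destruct (admissible_gt_m3 a b c Ha Hb Hc Ha0 Hb0 Hc0 H Htri) as (Ma & Mb & Mc).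
  split; [| exact Htri].
  pose proof (admissible_InT0_Rabs a b c 1 H) as H1; rewrite !Rmult_1_r in H1.
  apply H1; try lra; apply Rabs_nu_le_half; lra.
Qed.

Lemma admissible_sufficient a b c : a < 1 -> b < 1 -> c < 1 ->
  InT0 (Rabs (nu a)) (Rabs (nu b)) (Rabs (nu c)) -> triangle (Rabs a) (Rabs b) (Rabs c) ->
  admissible a b c.
Proof.
  intros Ha Hb Hc (S & N1 & N2 & N3) (T1 & T2 & T3) s Hs.
  apply InT_of_InT0_Rabs.
  pose proof (Rabs_nu_le_scale a s Ha Hs); pose proof (Rabs_nu_le_scale b s Hb Hs);
    pose proof (Rabs_nu_le_scale c s Hc Hs).
  pose proof (Rabs_nu_triangle_scaled a b c s Ha Hb Hc Hs T1 N1).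
  pose proof (Rabs_nu_triangle_scaled b a c s Hb Ha Hc Hs T2 N2).
  pose proof (Rabs_nu_triangle_scaled c a b s Hc Ha Hb Hs T3 N3).
  unfold InT0; lra.
Qed.

Theorem mainTheorem6 (w1 w2 w3 : R) :
  w1 < 1 -> w1 <> 0 -> w2 < 1 -> w2 <> 0 -> w3 < 1 -> w3 <> 0 ->
  ((forall l : C, Cmod l = 1 -> InT (nu_w w1 l) (nu_w w2 l) (nu_w w3 l)) <->
   (Rabs (n_w w1) + Rabs (n_w w2) + Rabs (n_w w3) <= 1 /\
    Rabs (n_w w1) <= Rabs (n_w w2) + Rabs (n_w w3) /\
    Rabs (n_w w2) <= Rabs (n_w w1) + Rabs (n_w w3) /\
    Rabs (n_w w3) <= Rabs (n_w w1) + Rabs (n_w w2) /\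
    Rabs w1 <= Rabs w2 + Rabs w3 /\
    Rabs w2 <= Rabs w1 + Rabs w3 /\
    Rabs w3 <= Rabs w1 + Rabs w2)).
Proof.
  intros H1 H1' H2 H2' H3 H3'.
  rewrite circle_iff_admissible, !n_w_nu.
  split.
  - intros H.
    destruct (admissible_necessary w1 w2 w3) as [(S & N1 & N2 & N3) (T1 & T2 & T3)]; auto.
    repeat split; assumption.
  - intros (S & N1 & N2 & N3 & T1 & T2 & T3).
    apply admissible_sufficient; repeat split; assumption.
Qed.
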